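(* Let $k,\ell$ be non-negative integers with $\ell<2k$. Let $D$ be an orientation of a $(k,\ell)$-sparse loopless multigraph $H=(V,F)$ in which every vertex has indegree at most $k$, and let $u,v\in V$ be distinct with $\varrho_D(u)+\varrho_D(v)\le 2k-\ell$. A set $X\subseteq V$ containing both $u$ and $v$ is a $(k,\ell)$-block of $H$ if and only if $\varrho_D(u)+\varrho_D(v)=2k-\ell$, $\varrho_D(X)=0$, and every vertex in $X\setminus\{u,v\}$ has indegree exactly $k$ in $D$.
   Context: For $X\subseteq V$, $i_H(X)$ is the number of edges of $H$ with both endpoints in $X$. $H$ is $(k,\ell)$-sparse if $i_H(X)\le\max\{k|X|-\ell,0\}$ for every $X\subseteq V$. A $(k,\ell)$-block of $H$ is a set $X\subseteq V$ with $i_H(X)=\max\{k|X|-\ell,0\}$. For a vertex $w$, $\varrho_D(w)$ is its indegree in $D$; for a set $X\subseteq V$, $\varrho_D(X)$ is the number of arcs of $D$ with tail in $V\setminus X$ and head in $X$. *)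

From mathcomp Require Import all_boot.
Set Implicit Arguments. Unset Strict Implicit. Unset Printing Implicit Defensive.

(* A directed multigraph D on vertex set V with arc set E: each arc e goes
   from [tl e] to [hd e].  Its underlying undirected multigraph is H
   (same edge set, endpoints {tl e, hd e}); D is an orientation of H. *)

Definition iH (V E : finType) (tl hd : E -> V) (X : {set V}) : nat :=
  #|[set e : E | (tl e \in X) && (hd e \in X)]|.

(* (k,l)-sparse: i_H(X) <= max(k|X| - l, 0) (truncated nat subtraction = max) *)
Definition sparse (V E : finType) (tl hd : E -> V) (k l : nat) : Prop :=
  forall X : {set V}, iH tl hd X <= k * #|X| - l.

Definition block (V E : finType) (tl hd : E -> V) (k l : nat) (X : {set V}) : Prop :=
  iH tl hd X = k * #|X| - l.

Definition indeg (V E : finType) (tl hd : E -> V) (w : V) : nat :=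
  #|[set e : E | hd e == w]|.

Definition indegS (V E : finType) (tl hd : E -> V) (X : {set V}) : nat :=
  #|[set e : E | (tl e \notin X) && (hd e \in X)]|.

From mathcomp Require Import all_boot.
From mathcomp Require Import zify.

(* Summing indegrees over X counts every arc with head in X once: those with
   tail in X give i_H(X), the others give rho_D(X).  Bounding the indegrees of
   u and v jointly by 2k - l and the other indegrees by k bounds the sum by
   k|X| - l, so X is a block exactly when rho_D(X) = 0 and all these bounds are
   attained. *)

Section Orientation.

Variables (V E : finType) (tl hd : E -> V).

Lemma card_head_in (X : {set V}) :
  #|[set e | hd e \in X]| = iH tl hd X + indegS tl hd X.
Proof.
rewrite -(cardsID [set e | tl e \in X]).
by congr (_ + _); apply: eq_card => e; rewrite !inE andbC.
Qed.

Lemma sum_indeg (X : {set V}) :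
  \sum_(w in X) indeg tl hd w = iH tl hd X + indegS tl hd X.
Proof.
rewrite -card_head_in -sum1dep_card (partition_big hd (mem X)) //=.
apply: eq_bigr => w wX; rewrite sum1dep_card; apply: eq_card => e.
by rewrite !inE; case: eqP => [-> | _]; rewrite ?wX ?andbF.
Qed.

End Orientation.

Lemma leqif_sum_const {T : finType} {f : T -> nat} {k : nat} :
  (forall w, f w <= k) -> forall A : {set T},
  \sum_(w in A) f w <= #|A| * k ?= iff [forall w in A, f w == k].
Proof.
move=> f_le A; rewrite -sum_nat_const.
by apply: leqif_sum => w _; apply: leqif_eq.
Qed.

Theorem lemma3 (V E : finType) (tl hd : E -> V) (k l : nat)
  (hl : l < 2 * k)
  (loopless : forall e : E, tl e != hd e)
  (hsparse : sparse tl hd k l)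
  (hindeg : forall w : V, indeg tl hd w <= k)
  (u v : V) (huv : u != v)
  (huv_deg : indeg tl hd u + indeg tl hd v <= 2 * k - l)
  (X : {set V}) (huX : u \in X) (hvX : v \in X) :
  block tl hd k l X <->
  [/\ indeg tl hd u + indeg tl hd v = 2 * k - l,
      indegS tl hd X = 0 &
      forall w : V, w \in X -> w != u -> w != v -> indeg tl hd w = k].
Proof.
set Y := X :\ u :\ v.
have hvXu : v \in X :\ u by rewrite !inE eq_sym huv hvX.
have cardX : #|X| = #|Y|.+2 by rewrite (cardsD1 u) huX (cardsD1 v) hvXu.
have bound : k * #|X| - l = (2 * k - l) + #|Y| * k by rewrite cardX; lia.
have sumX : \sum_(w in X) indeg tl hd w
            = indeg tl hd u + indeg tl hd v + \sum_(w in Y) indeg tl hd w.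
  by rewrite (big_setD1 u huX) (big_setD1 v hvXu) /= addnA.
have iH_le : iH tl hd X <= k * #|X| - l ?= iff
    [&& indegS tl hd X == 0, indeg tl hd u + indeg tl hd v == 2 * k - l
      & [forall w in Y, indeg tl hd w == k]].
  apply: (@leqif_trans _ (iH tl hd X + indegS tl hd X)).
    by split; [exact: leq_addr | rewrite -{1}[iH _ _ _]addn0 eqn_add2l eq_sym].
  rewrite -sum_indeg sumX bound.
  exact: leqif_add (leqif_eq huv_deg) (leqif_sum_const hindeg Y).
rewrite /block; split.
- move/eqP; rewrite iH_le => /and3P [/eqP-> /eqP-> /forall_inP hY].
  by split=> // w wX wu wv; apply/eqP/hY; rewrite !inE wX wu wv.
- case=> /eqP huv_eq /eqP h0 hw; apply/eqP; rewrite iH_le huv_eq h0 /=.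
  by apply/forall_inP => w; rewrite !inE => /and3P [wv wu wX]; apply/eqP/hw.
Qed.
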